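(* Let $\tau$ be an LOSR-free transformation which takes bipartite resources of one type to bipartite resources of another type, in one of the following three cases: (1) from type $\mathsf{CC}\to\mathsf{CC}$ (boxes) to type $\mathsf{II}\to\mathsf{QQ}$ (states); (2) from type $\mathsf{CC}\to\mathsf{CC}$ (boxes) to type $\mathsf{CI}\to\mathsf{CQ}$ (steering assemblages); (3) from type $\mathsf{CI}\to\mathsf{CQ}$ (steering assemblages) to type $\mathsf{II}\to\mathsf{QQ}$ (states). Then for every resource $R$ of the initial type (of any dimensions), the resource $\tau[R]$ is LOSR-free.
   Context: A system has a dimension and a type in $\{\mathsf{I},\mathsf{C},\mathsf{Q}\}$ (trivial, i.e. dimension 1; classical; quantum). A bipartite resource with Alice's input/output $\mathcal{X},\mathcal{A}$ and Bob's input/output $\mathcal{Y},\mathcal{B}$ is a completely positive linear map $R$ from operators on $\mathcal{X}\otimes\mathcal{Y}$ to operators on $\mathcal{A}\otimes\mathcal{B}$ with $\mathrm{tr}R[\xi\otimes\psi]=1$ for all density matrices $\xi,\psi$, nonsignaling in both directions ($\mathrm{tr}_{\mathcal{A}}R[\xi\otimes\psi]$ independent of $\xi$, $\mathrm{tr}_{\mathcal{B}}R[\xi\otimes\psi]$ independent of $\psi$), and satisfying classicality constraints: for a classical output $\mathcal{A}$, $\langle i|R[\xi\otimes\psi]|j\rangle_{\mathcal{A}}=0$ for $i\neq j$; for a classical input $\mathcal{X}$, $R[|i\rangle\langle j|\otimes\psi]=0$ for $i\ne j$ (analogously for Bob). Its type is $\mathsf{T}[\mathcal{X}]\mathsf{T}[\mathcal{Y}]\to\mathsf{T}[\mathcal{A}]\mathsf{T}[\mathcal{B}]$.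 A resource is LOSR-free if it equals $\sum_i p_i R^i_{\mathcal{A}|\mathcal{X}}\otimes R^i_{\mathcal{B}|\mathcal{Y}}$ for a probability distribution $(p_i)$ and single-party channels (CPTP maps respecting the classicality of their input/output). An LOSR-free transformation from resources with systems $\mathcal{X}\mathcal{Y}\to\mathcal{A}\mathcal{B}$ to resources with systems $\mathcal{X}'\mathcal{Y}'\to\mathcal{A}'\mathcal{B}'$ is a map of the form $\tau[R]=\sum_\lambda p_\lambda\,(\mathcal{E}^\lambda_{\mathcal{A}}\otimes\mathcal{E}^\lambda_{\mathcal{B}})\circ(R\otimes\mathrm{id}_{\mathcal{M}_A\mathcal{M}_B})\circ(\mathcal{P}^\lambda_{\mathcal{A}}\otimes\mathcal{P}^\lambda_{\mathcal{B}})$, i.e. a convex mixture of products of local supermaps, where $\mathcal{P}^\lambda_{\mathcal{A}}$ is a channel from $\mathcal{X}'$ to $\mathcal{X}\otimes\mathcal{M}_A$, $\mathcal{E}^\lambda_{\mathcal{A}}$ is a channel from $\mathcal{A}\otimes\mathcal{M}_A$ to $\mathcal{A}'$ (with local memory $\mathcal{M}_A$), similarly for Bob, such that $\tau$ maps resources of the initial type to resources of the target type. *)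

From HB Require Import structures.
From mathcomp Require Import all_boot all_order all_algebra.
From mathcomp Require Import reals.
From mathcomp.real_closed Require Import complex.
Set Implicit Arguments.
Unset Strict Implicit.
Unset Printing Implicit Defensive.
Import Order.TTheory GRing.Theory Num.Theory.
Local Open Scope ring_scope.

(* System types: trivial, classical, quantum. *)
Inductive kind := KI | KC | KQ.

(* A system of kind k carried by the finite index type I (basis of the
   Hilbert space C^I).  A trivial system has dimension 1; other systems
   have positive dimension. *)
Definition systype (k : kind) (I : finType) : Prop :=
  match k with KI => #|I| = 1%N | _ => (0 < #|I|)%N end.

Section Quantum.
Variable R : realType.
Local Notation C := R[i].

Definition op (I : finType) := I -> I -> C.

Definition tr (I : finType) (Z : op I) : C := \sum_(i : I) Z i i.

Definition psd (I : finType) (Z : op I) : Prop :=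
  forall v : I -> C, 0 <= \sum_(i : I) \sum_(j : I) (v i)^* * Z i j * v j.

Definition density (I : finType) (Z : op I) : Prop := psd Z /\ tr Z = 1.

Definition ketbra (I : finType) (i j : I) : op I :=
  fun a b => ((a == i)%:R * (b == j)%:R : C).

Definition tens (I J : finType) (Z1 : op I) (Z2 : op J) : op (I * J)%type :=
  fun p q => Z1 p.1 q.1 * Z2 p.2 q.2.

Definition ptrA (I J : finType) (Z : op (I * J)%type) : op J :=
  fun j j' => \sum_(i : I) Z (i, j) (i, j').
Definition ptrB (I J : finType) (Z : op (I * J)%type) : op I :=
  fun i i' => \sum_(j : J) Z (i, j) (i', j).

Definition relabel (S S' : finType) (f : S' -> S) (W : op S) : op S' :=
  fun s t => W (f s) (f t).

Definition linmap (I J : finType) (Phi : op I -> op J) : Prop :=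
  forall (c : C) (Z1 Z2 : op I) (a b : J),
    Phi (fun x y => c * Z1 x y + Z2 x y) a b = c * Phi Z1 a b + Phi Z2 a b.

Definition ampl_r (K I J : finType) (Phi : op I -> op J) (P : op (K * I)%type)
  : op (K * J)%type :=
  fun p q => Phi (fun i j => P (p.1, i) (q.1, j)) p.2 q.2.
Definition ampl_l (K I J : finType) (Phi : op I -> op J) (P : op (I * K)%type)
  : op (J * K)%type :=
  fun p q => Phi (fun i j => P (i, p.2) (j, q.2)) p.1 q.1.

Definition maptens (I1 J1 I2 J2 : finType) (Phi : op I1 -> op J1)
  (Psi : op I2 -> op J2) (Z : op (I1 * I2)%type) : op (J1 * J2)%type :=
  ampl_l Phi (ampl_r Psi Z).

Definition CP (I J : finType) (Phi : op I -> op J) : Prop :=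
  forall (k : nat) (P : op ('I_k * I)%type), psd P -> psd (ampl_r Phi P).

Definition TP (I J : finType) (Phi : op I -> op J) : Prop :=
  forall Z : op I, tr (Phi Z) = tr Z.

Definition qchannel (I J : finType) (Phi : op I -> op J) : Prop :=
  [/\ linmap Phi, CP Phi & TP Phi].

Definition channel (kI kO : kind) (I J : finType) (Phi : op I -> op J) : Prop :=
  [/\ qchannel Phi,
      kI = KC -> forall (i j : I) (a b : J), i != j -> Phi (ketbra i j) a b = 0
    & kO = KC -> forall (Z : op I) (a b : J), a != b -> Phi Z a b = 0].

Definition prob (n : nat) (p : 'I_n -> C) : Prop :=
  (forall l, 0 <= p l) /\ \sum_(l < n) p l = 1.

Definition resource (kX kY kA kB : kind) (X Y A B : finType)
  (Rs : op (X * Y)%type -> op (A * B)%type) : Prop :=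
  linmap Rs /\ CP Rs /\
      (forall (xi : op X) (psi : op Y), density xi -> density psi ->
         tr (Rs (tens xi psi)) = 1) /\
      (forall (xi xi' : op X) (psi : op Y), density xi -> density xi' ->
         density psi ->
         forall b b', ptrA (Rs (tens xi psi)) b b' = ptrA (Rs (tens xi' psi)) b b') /\
      (forall (xi : op X) (psi psi' : op Y), density xi -> density psi ->
         density psi' ->
         forall a a', ptrB (Rs (tens xi psi)) a a' = ptrB (Rs (tens xi psi')) a a') /\
      (kA = KC -> forall (xi : op X) (psi : op Y), density xi -> density psi ->
         forall (a a' : A) (b b' : B), a != a' -> Rs (tens xi psi) (a, b) (a', b') = 0) /\
      (kB = KC -> forall (xi : op X) (psi : op Y), density xi -> density psi ->
         forall (a a' : A) (b b' : B), b != b' -> Rs (tens xi psi) (a, b) (a', b') = 0) /\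
      (kX = KC -> forall (x x' : X) (psi : op Y), density psi -> x != x' ->
         forall u v, Rs (tens (ketbra x x') psi) u v = 0) /\
      (kY = KC -> forall (xi : op X) (y y' : Y), density xi -> y != y' ->
         forall u v, Rs (tens xi (ketbra y y')) u v = 0).

Definition LOSR_free (kX kY kA kB : kind) (X Y A B : finType)
  (Rs : op (X * Y)%type -> op (A * B)%type) : Prop :=
  exists (n : nat) (p : 'I_n -> C)
         (RA : 'I_n -> op X -> op A) (RB : 'I_n -> op Y -> op B),
    [/\ prob p,
        forall l, channel kX kA (RA l) /\ channel kY kB (RB l)
      & forall (Z : op (X * Y)%type) (u v : (A * B)%type),
          Rs Z u v = \sum_(l < n) p l * maptens (RA l) (RB l) Z u v].

Definition sw_in (X Y MA MB : finType) (s : (X * Y)%type * (MA * MB)%type)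
  : (X * MA)%type * (Y * MB)%type := ((s.1.1, s.2.1), (s.1.2, s.2.2)).
Definition sw_out (A B MA MB : finType) (s : (A * MA)%type * (B * MB)%type)
  : (A * B)%type * (MA * MB)%type := ((s.1.1, s.2.1), (s.1.2, s.2.2)).

(* tau[R] = sum_l p_l (E_A^l (x) E_B^l) o (R (x) id_{MA MB}) o (P_A^l (x) P_B^l) *)
Definition tau (X Y A B X' Y' A' B' MA MB : finType) (n : nat)
  (p : 'I_n -> C)
  (PA : 'I_n -> op X' -> op (X * MA)%type) (PB : 'I_n -> op Y' -> op (Y * MB)%type)
  (EA : 'I_n -> op (A * MA)%type -> op A') (EB : 'I_n -> op (B * MB)%type -> op B')
  (Rs : op (X * Y)%type -> op (A * B)%type) : op (X' * Y')%type -> op (A' * B')%type :=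
  fun Z u v => \sum_(l < n) p l *
    maptens (EA l) (EB l)
      (relabel (@sw_out A B MA MB)
         (ampl_l Rs (relabel (@sw_in X Y MA MB) (maptens (PA l) (PB l) Z)))) u v.

Definition LOSR_free_transformation
  (kX kY kA kB kX' kY' kA' kB' : kind)
  (X Y A B X' Y' A' B' MA MB : finType) (n : nat) (p : 'I_n -> C)
  (PA : 'I_n -> op X' -> op (X * MA)%type) (PB : 'I_n -> op Y' -> op (Y * MB)%type)
  (EA : 'I_n -> op (A * MA)%type -> op A') (EB : 'I_n -> op (B * MB)%type -> op B')
  : Prop :=
  prob p /\ [/\
      forall l, [/\ qchannel (PA l),
        kX' = KC -> forall (i j : X') u v, i != j -> PA l (ketbra i j) u v = 0
      & kX = KC -> forall (Z : op X') (x x' : X) (m m' : MA), x != x' ->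
          PA l Z (x, m) (x', m') = 0],
      forall l, [/\ qchannel (PB l),
        kY' = KC -> forall (i j : Y') u v, i != j -> PB l (ketbra i j) u v = 0
      & kY = KC -> forall (Z : op Y') (y y' : Y) (m m' : MB), y != y' ->
          PB l Z (y, m) (y', m') = 0],
      forall l, [/\ qchannel (EA l),
        kA = KC -> forall (a a' : A) (sigma : op MA) u v, a != a' ->
          EA l (tens (ketbra a a') sigma) u v = 0
      & kA' = KC -> forall (Z : op (A * MA)%type) (u v : A'), u != v -> EA l Z u v = 0],
      forall l, [/\ qchannel (EB l),
        kB = KC -> forall (b b' : B) (sigma : op MB) u v, b != b' ->
          EB l (tens (ketbra b b') sigma) u v = 0
      & kB' = KC -> forall (Z : op (B * MB)%type) (u v : B'), u != v -> EB l Z u v = 0]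
    &
      forall Rs : op (X * Y)%type -> op (A * B)%type, resource kX kY kA kB Rs ->
        resource kX' kY' kA' kB' (tau p PA PB EA EB Rs)].

End Quantum.

Definition prop2_case (kX kY kA kB kX' kY' kA' kB' : kind) : Prop :=
  [\/ [/\ kX = KC, kY = KC, kA = KC & kB = KC] /\
      [/\ kX' = KI, kY' = KI, kA' = KQ & kB' = KQ],
      [/\ kX = KC, kY = KC, kA = KC & kB = KC] /\
      [/\ kX' = KC, kY' = KI, kA' = KC & kB' = KQ]
    | [/\ kX = KC, kY = KI, kA = KC & kB = KQ] /\
      [/\ kX' = KI, kY' = KI, kA' = KQ & kB' = KQ]].

(* The classical inputs of the initial resource force every pre-processed
   input to be block diagonal in the classical input register, so the resource
   is only ever evaluated on basis inputs |x,y><x,y|.  There its classical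
   output splits as a sum over outcomes a of |a><a| (x) rho_{a|xy} with
   positive rho_{a|xy} (for a box, rho_{a|xy} is itself diagonal, with
   entries P(ab|xy)).  Substituting into tau, its value on product basis
   inputs becomes a finite sum of products of local maps, each of which acts
   on basis inputs as a nonnegative weight times a measure-and-prepare channel;
   normalising the weights gives an explicit LOSR decomposition, which by
   linearity holds on all inputs.  For steering targets, Alice's local map
   must have a weight independent of her input; grouping the terms by Bob's
   (y, b), that weight is p_l P(b|y), independent of x by no-signalling. *)

From HB Require Import structures.
From mathcomp Require Import all_boot all_order all_algebra.
From mathcomp Require Import reals.
From mathcomp.real_closed Require Import complex.
From mathcomp Require Import ring.
Set Implicit Arguments.
Unset Strict Implicit.
Unset Printing Implicit Defensive.
Import Order.TTheory GRing.Theory Num.Theory.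
Local Open Scope ring_scope.

Section QuantumResources.
Variable R : realType.
Local Notation C := R[i].
Local Notation op := (op R).

Lemma op_ext (I : finType) (W W' : op I) : (forall i j, W i j = W' i j) -> W = W'.
Proof. by move=> eqW; apply: boolp.funext => i; apply: boolp.funext => j; apply: eqW. Qed.

Lemma big_pair (I J : finType) (F : (I * J)%type -> C) :
  \sum_u F u = \sum_i \sum_j F (i, j).
Proof. by rewrite pair_bigA; apply: eq_bigr => -[]. Qed.

Definition basis (I : finType) (d : I) : I -> C := fun k => (k == d)%:R.

Lemma sum_basisl (I : finType) (F : I -> C) d : \sum_i basis d i * F i = F d.
Proof.
rewrite (bigD1 d) //= /basis eqxx mul1r big1 ?addr0 // => i /negbTE ->.
by rewrite mul0r.
Qed.

Lemma sum_basisr (I : finType) (F : I -> C) d : \sum_i F i * basis d i = F d.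
Proof. by under eq_bigr do rewrite mulrC; rewrite sum_basisl. Qed.

Lemma conj_basis (I : finType) (d i : I) : (basis d i)^* = basis d i.
Proof. exact: rmorph_nat. Qed.

Definition qf (I : finType) (S : op I) (v : I -> C) : C :=
  \sum_i \sum_j (v i)^* * S i j * v j.

Lemma qf_basis (I : finType) (S : op I) d : qf S (basis d) = S d d.
Proof.
rewrite /qf; under eq_bigr => i _ do
  rewrite conj_basis (sum_basisr (fun j => basis d i * S i j)).
exact: sum_basisl.
Qed.

Lemma qf_addZbasis (I : finType) (S : op I) (v : I -> C) d (c : C) :
  qf S (fun k => v k + c * basis d k) =
  qf S v + c * \sum_i (v i)^* * S i d + c^* * \sum_j S d j * v j + c^* * c * S d d.
Proof.
have expand i j : (v i + c * basis d i)^* * S i j * (v j + c * basis d j) =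
    (v i)^* * S i j * v j + c * ((v i)^* * S i j * basis d j)
    + c^* * (basis d i * (S i j * v j)) + c^* * c * (basis d i * (S i j * basis d j)).
  by rewrite rmorphD rmorphM /= conj_basis; ring.
rewrite /qf; under eq_bigr => i _ do under eq_bigr => j _ do rewrite expand.
under eq_bigr => i _ do rewrite !big_split /=.
rewrite !big_split /=; congr (_ + _ + _ + _).
- by under eq_bigr => i _ do rewrite -mulr_sumr sum_basisr; rewrite -mulr_sumr.
- under eq_bigr => i _ do rewrite -mulr_sumr -mulr_sumr.
  by rewrite -mulr_sumr sum_basisl.
- under eq_bigr => i _ do rewrite -mulr_sumr -mulr_sumr sum_basisr.
  by rewrite -mulr_sumr sum_basisl.
Qed.

Lemma qf_basis_addZbasis (I : finType) (S : op I) i d (c : C) :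
  qf S (fun k => basis i k + c * basis d k) =
  S i i + c * S i d + c^* * S d i + c^* * c * S d d.
Proof.
rewrite qf_addZbasis qf_basis sum_basisr.
by under eq_bigr do rewrite conj_basis; rewrite sum_basisl.
Qed.

Section Psd.
Variables (I : finType) (S : op I).
Hypothesis S_psd : psd S.

Lemma psd_diag_ge0 d : 0 <= S d d.
Proof. by have := S_psd (basis d); rewrite -/(qf S _) qf_basis. Qed.

Lemma psd_hermitian i j : S j i = (S i j)^*.
Proof.
(* Polarisation: the form is real at e_i + e_j and at e_i + 'i e_j. *)
have realqf c : (qf S (fun k => basis i k + c * basis j k))^* =
                 qf S (fun k => basis i k + c * basis j k).
  exact/geC0_conj/S_psd.
have := realqf 1; have := realqf 'i; rewrite !qf_basis_addZbasis.
rewrite !(rmorphD, rmorphM) /= !conjCK conjCi rmorph1 !mul1r.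
rewrite (geC0_conj (psd_diag_ge0 i)) (geC0_conj (psd_diag_ge0 j)).
set x := S i j; set y := S j i => e2 e1.
have e1' : x^* + y^* = x + y.
  apply: (addrI (S i i + S j j)).
  by transitivity (S i i + x^* + y^* + S j j); [ring | rewrite e1; ring].
have e2' : y^* - x^* = x - y.
  have i_neq0 : 'i != 0 :> C by exact: neq0Ci.
  apply: (mulfI i_neq0); apply: (addrI (S i i + 'i * - 'i * S j j)).
  transitivity (S i i + - 'i * x^* + 'i * y^* + 'i * - 'i * S j j); first ring.
  by rewrite e2; ring.
have yx : y^* = x.
  apply/eqP; rewrite -subr_eq0; apply/eqP.
  transitivity ((x^* + y^* - (x + y) + (y^* - x^* - (x - y))) / 2); first by field.
  by rewrite e1' e2' !subrr addr0 mul0r.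
by rewrite -yx conjCK.
Qed.

Lemma psd_diag0_row0 d j : S d d = 0 -> S d j = 0.
Proof.
move=> Sdd0; have [//|b_neq0] := eqVneq (S d j) 0; exfalso.
set b := S d j in b_neq0; set s := S j j.
(* At e_j + c e_d with c = -(s + 1) / b^*, the form equals -(s + 2) < 0. *)
have s_ge0 : 0 <= s := psd_diag_ge0 j.
have bc_neq0 : b^* != 0 by rewrite conjC_eq0.
have := S_psd (fun k => basis j k + (- (s + 1) / b^*) * basis d k).
rewrite -/(qf S _) qf_basis_addZbasis Sdd0 mulr0 addr0 (psd_hermitian d j) -/b -/s.
have -> : s + - (s + 1) / b^* * b^* + (- (s + 1) / b^*)^* * b = - (s + 2).
  rewrite !(rmorphM, rmorphN, rmorphD) /= fmorphV /= conjCK rmorph1 (geC0_conj s_ge0).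
  by rewrite !divfK //; ring.
rewrite oppr_ge0 => /(lt_le_trans (ltr_wpDl s_ge0 (ltr0Sn _ 1))).
by rewrite ltxx.
Qed.

Lemma psd_tr0 : tr S = 0 -> forall i j, S i j = 0.
Proof.
move=> trS0 i j; apply: psd_diag0_row0.
by apply: (psumr_eq0P _ trS0) => // k _; apply: psd_diag_ge0.
Qed.

Lemma psd_schur d : S d d != 0 -> psd (fun i j => S i j - S i d * S d j / S d d).
Proof.
move=> Sdd_neq0 v; set beta := \sum_j S d j * v j.
have col : \sum_i (v i)^* * S i d = beta^*.
  by rewrite rmorph_sum; apply: eq_bigr => i _; rewrite rmorphM /= -psd_hermitian mulrC.
have Sdd_real : (S d d)^* = S d d := geC0_conj (psd_diag_ge0 d).
have -> : \sum_i \sum_j (v i)^* * (S i j - S i d * S d j / S d d) * v j =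
          qf S v - beta^* * beta / S d d.
  rewrite /qf -col /beta mulr_suml mulr_suml -sumrB; apply: eq_bigr => i _.
  by rewrite mulr_sumr mulr_suml -sumrB; apply: eq_bigr => j _; ring.
have := S_psd (fun k => v k + (- beta / S d d) * basis d k).
rewrite -/(qf S _) qf_addZbasis col -/beta !(rmorphM, rmorphN) /= fmorphV /= Sdd_real.
suff -> : qf S v + - beta / S d d * beta^* + - beta^* / S d d * beta +
          - beta^* / S d d * (- beta / S d d) * S d d = qf S v - beta^* * beta / S d d by [].
by field.
Qed.

End Psd.

(* Cholesky elimination: split off the rank-one term through a nonzero pivot
   [S d d] and recurse on the Schur complement, which vanishes on row [d]. *)
Lemma psd_gram_supp (I : finType) (s : seq I) (S : op I) :
  psd S -> (forall i j, i \notin s -> S i j = 0) ->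
  exists L : seq (I -> C), forall i j, S i j = \sum_(u <- L) u i * (u j)^*.
Proof.
elim: s S => [|d s IH] S S_psd S_supp.
  by exists [::] => i j; rewrite big_nil S_supp.
have [Sdd0|Sdd_neq0] := eqVneq (S d d) 0.
  apply: IH => // i j i_notin; have [->|i_neq_d] := eqVneq i d.
    exact: psd_diag0_row0.
  by apply: S_supp; rewrite inE negb_or i_neq_d.
have [|L eqL] := IH _ (psd_schur S_psd Sdd_neq0).
  move=> i j i_notin; have [->|i_neq_d] := eqVneq i d; first by field.
  have i_out : i \notin d :: s by rewrite inE negb_or i_neq_d.
  by rewrite !(S_supp i _ i_out) mul0r mul0r subr0.
set r := sqrtC (S d d)^-1.
have r_real : r^* = r by apply: geC0_conj; rewrite sqrtC_ge0 invr_ge0 psd_diag_ge0.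
have r2 : r * r = (S d d)^-1 by rewrite -expr2 sqrtCK.
exists ((fun k => r * S k d) :: L) => i j.
rewrite big_cons -eqL rmorphM /= r_real -(psd_hermitian S_psd j d).
have -> : r * S i d * (r * S d j) = (r * r) * S i d * S d j by ring.
by rewrite r2; field.
Qed.

Lemma psd_gram (I : finType) (S : op I) : psd S ->
  exists L : seq (I -> C), forall i j, S i j = \sum_(u <- L) u i * (u j)^*.
Proof. by move=> S_psd; apply: (psd_gram_supp (s := enum I)) => // i j; rewrite mem_enum. Qed.

Lemma psd_tens (I J : finType) (S1 : op I) (S2 : op J) :
  psd S1 -> psd S2 -> psd (tens S1 S2).
Proof.
move=> S1_psd /psd_gram [L eqS2] v; change (0 <= qf (tens S1 S2) v).
pose w (u : J -> C) i := \sum_l (u l)^* * v (i, l).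
suff -> : qf (tens S1 S2) v = \sum_(u <- L) qf S1 (w u).
  by apply: sumr_ge0 => u _; apply: S1_psd.
rewrite /qf /tens big_pair.
under eq_bigr => i _ do under eq_bigr => k _ do rewrite big_pair /=.
under eq_bigr => i _ do under eq_bigr => k _ do under eq_bigr => j _ do
  under eq_bigr => l _ do rewrite eqS2 mulr_sumr mulr_sumr mulr_suml.
under eq_bigr => i _ do under eq_bigr => k _ do under eq_bigr => j _ do
  rewrite exchange_big.
under eq_bigr => i _ do under eq_bigr => k _ do rewrite exchange_big.
under eq_bigr => i _ do rewrite exchange_big.
rewrite exchange_big; apply: eq_bigr => u _; apply: eq_bigr => i _.
rewrite exchange_big; apply: eq_bigr => j _.
rewrite /w rmorph_sum mulr_suml mulr_suml; apply: eq_bigr => k _.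
rewrite mulr_sumr; apply: eq_bigr => l _.
by rewrite rmorphM /= conjCK; ring.
Qed.

Lemma psd_rank1 (I : finType) (u : I -> C) : psd (fun a b => u a * (u b)^*).
Proof.
move=> v; set z := \sum_a (v a)^* * u a.
have -> : \sum_a \sum_b (v a)^* * (u a * (u b)^*) * v b = z * z^*.
  rewrite /z rmorph_sum mulr_suml; apply: eq_bigr => a _.
  by rewrite mulr_sumr; apply: eq_bigr => b _; rewrite rmorphM /= conjCK; ring.
exact: mul_conjC_ge0.
Qed.

Lemma psd_ketbra (I : finType) (i : I) : psd (ketbra R i i).
Proof.
have -> : ketbra R i i = fun a b => basis i a * (basis i b)^*.
  by apply: op_ext => a b; rewrite conj_basis.
exact: psd_rank1.
Qed.

Lemma qf_sum (I : finType) (T : Type) (r : seq T) (c : T -> C) (K : T -> op I) v :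
  qf (fun i j => \sum_(t <- r) c t * K t i j) v = \sum_(t <- r) c t * qf (K t) v.
Proof.
rewrite /qf; under eq_bigr => i _ do under eq_bigr => j _ do rewrite mulr_sumr mulr_suml.
under eq_bigr => i _ do rewrite exchange_big.
rewrite exchange_big; apply: eq_bigr => t _; rewrite mulr_sumr; apply: eq_bigr => i _.
by rewrite mulr_sumr; apply: eq_bigr => j _; ring.
Qed.

Lemma psd_sum (I : finType) (T : Type) (r : seq T) (c : T -> C) (K : T -> op I) :
  (forall t, 0 <= c t) -> (forall t, psd (K t)) ->
  psd (fun i j => \sum_(t <- r) c t * K t i j).
Proof.
move=> c_ge0 K_psd v; rewrite -/(qf _ _) qf_sum; apply: sumr_ge0 => t _.
exact: mulr_ge0 (c_ge0 t) (K_psd t v).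
Qed.

Lemma psd_scale (I : finType) (c : C) (S : op I) :
  0 <= c -> psd S -> psd (fun i j => c * S i j).
Proof.
move=> c_ge0 S_psd v.
have -> : \sum_i \sum_j (v i)^* * (c * S i j) * v j = c * qf S v.
  rewrite /qf mulr_sumr; apply: eq_bigr => i _.
  by rewrite mulr_sumr; apply: eq_bigr => j _; ring.
exact: mulr_ge0 c_ge0 (S_psd v).
Qed.

Lemma mulr_sum2 (I J : finType) (a : I -> C) (w : C) (b : J -> C) :
  (\sum_i a i) * w * (\sum_j b j) = \sum_i \sum_j a i * w * b j.
Proof. by rewrite !mulr_suml; apply: eq_bigr => i _; rewrite mulr_sumr. Qed.

Lemma qf_relabel (S S' : finType) (f : S' -> S) (W : op S) v :
  qf (relabel f W) v = qf W (fun s => \sum_s' (f s' == s)%:R * v s').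
Proof.
rewrite /qf /relabel.
under [RHS]eq_bigr => s _ do under eq_bigr => t _ do rewrite rmorph_sum mulr_sum2.
under [RHS]eq_bigr => s _ do rewrite exchange_big /=.
rewrite [RHS]exchange_big /=; apply: eq_bigr => s' _.
under [RHS]eq_bigr => s _ do rewrite exchange_big /=.
rewrite [RHS]exchange_big /=; apply: eq_bigr => t' _.
rewrite (bigD1 (f s')) //= [X in _ + X]big1 ?addr0 => [|s /negbTE s_neq]; last first.
  by apply: big1 => t _; rewrite rmorphM /= rmorph_nat eq_sym s_neq !(mul0r, mulr0).
rewrite (bigD1 (f t')) //= [X in _ + X]big1 ?addr0 => [|t /negbTE t_neq]; last first.
  by rewrite eq_sym t_neq !(mul0r, mulr0).
by rewrite !eqxx rmorphM /= rmorph_nat; ring.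
Qed.

Lemma psd_relabel (S S' : finType) (f : S' -> S) (W : op S) :
  psd W -> psd (relabel f W).
Proof. by move=> W_psd v; rewrite -/(qf _ _) qf_relabel; apply: W_psd. Qed.

Lemma CP_psd (I J : finType) (F : op I -> op J) (W : op I) : CP F -> psd W -> psd (F W).
Proof.
move=> F_cp W_psd.
exact: (psd_relabel (fun j : J => (ord0 : 'I_1, j))
                    (F_cp 1%N _ (psd_relabel (fun u : 'I_1 * I => u.2) W_psd))).
Qed.

Lemma tr_ge0 (I : finType) (S : op I) : psd S -> 0 <= tr S.
Proof. by move=> S_psd; apply: sumr_ge0 => i _; apply: psd_diag_ge0. Qed.

Lemma tr_tens (I J : finType) (S1 : op I) (S2 : op J) : tr (tens S1 S2) = tr S1 * tr S2.
Proof. by rewrite /tr /tens big_pair mulr_suml; apply: eq_bigr => i _; rewrite mulr_sumr. Qed.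

Lemma tr_ketbra (I : finType) (i : I) : tr (ketbra R i i) = 1.
Proof.
rewrite /tr -(sum_basisl (fun=> 1) i); apply: eq_bigr => j _.
by rewrite /ketbra -natrM mulnb andbb mulr1.
Qed.

Lemma density_ketbra (I : finType) (i : I) : density (ketbra R i i).
Proof. by split; [apply: psd_ketbra | apply: tr_ketbra]. Qed.

Lemma ketbra_pair (I J : finType) (i i' : I) (j j' : J) :
  ketbra R (i, j) (i', j') = tens (ketbra R i i') (ketbra R j j').
Proof.
apply: op_ext => -[a b] [a' b']; rewrite /ketbra /tens /= !xpair_eqE.
by rewrite -!mulnb !natrM; ring.
Qed.

Lemma tr_sum (I : finType) (T : Type) (r : seq T) (c : T -> C) (K : T -> op I) :
  tr (fun u v => \sum_(t <- r) c t * K t u v) = \sum_(t <- r) c t * tr (K t).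
Proof. by rewrite /tr exchange_big; apply: eq_bigr => t _; rewrite mulr_sumr. Qed.

Lemma diag_sum (I : finType) (W : op I) u v : (forall u v, u != v -> W u v = 0) ->
  W u v = \sum_w W w w * ketbra R w w u v.
Proof.
move=> W_diag; rewrite (bigD1 u) //= [X in _ + X]big1 ?addr0 => [|w w_neq]; last first.
  by rewrite /ketbra eq_sym (negbTE w_neq) mul0r mulr0.
rewrite /ketbra eqxx mul1r; have [->|v_neq] := eqVneq v u; first by rewrite mulr1.
by rewrite mulr0 W_diag // eq_sym.
Qed.

Section Linear.
Variables (I J : finType) (F : op I -> op J).
Hypothesis F_lin : linmap F.

Lemma linmap_comb (c : C) Z1 Z2 :
  F (fun x y => c * Z1 x y + Z2 x y) = fun a b => c * F Z1 a b + F Z2 a b.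
Proof. by apply: op_ext => a b; apply: F_lin. Qed.

Lemma linmap0 : F (fun _ _ => 0) = fun _ _ => 0.
Proof.
apply: op_ext => a b; have := F_lin 1 (fun _ _ => 0) (fun _ _ => 0) a b.
rewrite /= mulr0 addr0 mul1r => F0_twice.
by apply: (addrI (F (fun _ _ => 0) a b)); rewrite addr0 -F0_twice.
Qed.

Lemma linmapZ (c : C) Z : F (fun x y => c * Z x y) = fun a b => c * F Z a b.
Proof.
have := linmap_comb c Z (fun _ _ => 0); rewrite linmap0.
under [fun x y => _]op_ext do rewrite addr0.
by move=> ->; apply: op_ext => a b; rewrite addr0.
Qed.

Lemma linmap_sum (T : Type) (r : seq T) (c : T -> C) (K : T -> op I) :
  F (fun x y => \sum_(t <- r) c t * K t x y) = fun a b => \sum_(t <- r) c t * F (K t) a b.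
Proof.
elim: r => [|t r IH].
  under [fun x y => _]op_ext do rewrite big_nil.
  by rewrite linmap0; apply: op_ext => a b; rewrite big_nil.
under [fun x y => _]op_ext do rewrite big_cons.
by rewrite linmap_comb IH; apply: op_ext => a b; rewrite big_cons.
Qed.

End Linear.

Lemma linmap_ketbra_ext (I J : finType) (F G : op I -> op J) :
  linmap F -> linmap G -> (forall i j, F (ketbra R i j) = G (ketbra R i j)) ->
  forall Z, F Z = G Z.
Proof.
move=> F_lin G_lin eqFG Z.
have -> : Z = fun x y => \sum_(u <- index_enum (prod I I)) Z u.1 u.2 * ketbra R u.1 u.2 x y.
  apply: op_ext => x y; rewrite -/(\sum_(u : prod I I) _) big_pair /=.
  rewrite -(sum_basisl (fun i => Z i y) x); apply: eq_bigr => i _.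
  rewrite -(sum_basisl (fun j => Z i j) y) mulr_sumr; apply: eq_bigr => j _.
  by rewrite /ketbra /basis (eq_sym x i) (eq_sym y j); ring.
rewrite (linmap_sum F_lin) (linmap_sum G_lin); apply: op_ext => a b.
by apply: eq_bigr => u _; rewrite eqFG.
Qed.

Lemma linmap_maptens (I1 J1 I2 J2 : finType) (F : op I1 -> op J1) (G : op I2 -> op J2) :
  linmap F -> linmap G -> linmap (maptens F G).
Proof.
move=> F_lin G_lin c Z1 Z2 a b; rewrite /maptens /ampl_l /ampl_r.
rewrite (_ : (fun i j => _) = fun i j => c * G (fun k l => Z1 (i, k) (j, l)) a.2 b.2 +
                                        G (fun k l => Z2 (i, k) (j, l)) a.2 b.2).
  exact: F_lin.
by apply: op_ext => i j; apply: G_lin.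
Qed.

Lemma maptens_tens (I1 J1 I2 J2 : finType) (F : op I1 -> op J1) (G : op I2 -> op J2) Z1 Z2 :
  linmap F -> linmap G -> maptens F G (tens Z1 Z2) = tens (F Z1) (G Z2).
Proof.
move=> F_lin G_lin; apply: op_ext => u v; rewrite /maptens /ampl_l /ampl_r /tens /=.
rewrite (_ : (fun i j => _) = fun i j => G Z2 u.2 v.2 * Z1 i j) ?(linmapZ F_lin) 1?mulrC //.
by apply: op_ext => i j; rewrite (linmapZ G_lin) mulrC.
Qed.

Definition mp (I J : finType) (beta : I -> op J) : op I -> op J :=
  fun Z a b => \sum_x Z x x * beta x a b.

Lemma mp_ketbra (I J : finType) (beta : I -> op J) i i' :
  mp beta (ketbra R i i') = fun a b => (i == i')%:R * beta i a b.
Proof.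
apply: op_ext => a b; rewrite /mp -(sum_basisl (fun x => (x == i')%:R * beta x a b) i).
by apply: eq_bigr => x _; rewrite /ketbra /basis mulrA.
Qed.

Lemma mp_channel (kI kO : kind) (I J : finType) (beta : I -> op J) :
  (forall x, psd (beta x)) -> (forall x, tr (beta x) = 1) ->
  (kO = KC -> forall x a b, a != b -> beta x a b = 0) ->
  channel kI kO (mp beta).
Proof.
move=> beta_psd beta_tr beta_cl; split; first split.
- by move=> c Z1 Z2 a b; rewrite /mp mulr_sumr -big_split /=; apply: eq_bigr => x _; ring.
- move=> k P P_psd.
  have -> : ampl_r (mp beta) P = fun u v => \sum_(x <- index_enum I) 1 *
       tens (relabel (fun r : 'I_k => (r, x)) P) (beta x) u v.
    by apply: op_ext => u v; apply: eq_bigr => x _; rewrite mul1r.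
  by apply: psd_sum => // x; apply: psd_tens => //; apply: psd_relabel.
- move=> Z; rewrite /tr /mp exchange_big /=; apply: eq_bigr => x _.
  by rewrite -mulr_sumr -/(tr _) beta_tr mulr1.
- by move=> _ i j a b /negbTE i_neq_j; rewrite mp_ketbra i_neq_j mul0r.
- by move=> /beta_cl cl Z a b a_neq_b; rewrite /mp big1 // => x _; rewrite cl // mulr0.
Qed.

Lemma mp_const_channel (kI kO : kind) (I J : finType) (a0 : J) :
  channel kI kO (mp (fun _ : I => ketbra R a0 a0)).
Proof.
apply: mp_channel => [x|x|_ x a b a_neq_b]; [exact: psd_ketbra | exact: tr_ketbra |].
rewrite /ketbra; have [eq_a|_] := eqVneq a a0; last by rewrite mul0r.
by rewrite eq_sym -eq_a (negbTE a_neq_b) mulr0.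
Qed.

(* [F] agrees on basis operators with [w] times a measure-and-prepare channel,
   [w] being the common trace of the [F |i><i|]. *)
Definition scaled_mp_on_basis (kO : kind) (I J : finType) (F : op I -> op J) : Prop :=
  [/\ forall i i' a b, i != i' -> F (ketbra R i i') a b = 0,
      forall i, psd (F (ketbra R i i)),
      forall i i', tr (F (ketbra R i i)) = tr (F (ketbra R i' i'))
    & kO = KC -> forall i a b, a != b -> F (ketbra R i i) a b = 0].

(* If [F] vanishes any channel will do; we prepare [|a0><a0|]. *)
Definition normalized_mp (I J : finType) (F : op I -> op J) (i0 : I) (a0 : J) :
  op I -> op J :=
  let w := tr (F (ketbra R i0 i0)) in
  if w == 0 then mp (fun _ => ketbra R a0 a0)
  else mp (fun i a b => w^-1 * F (ketbra R i i) a b).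

Section NormalizedMp.
Variables (kO : kind) (I J : finType) (F : op I -> op J) (i0 : I) (a0 : J).
Hypothesis F_mp : scaled_mp_on_basis kO F.

Lemma normalized_mp_channel (kI : kind) : channel kI kO (normalized_mp F i0 a0).
Proof.
have [_ F_psd F_tr F_cl] := F_mp; rewrite /normalized_mp.
case: eqP => [_|/eqP w_neq0]; first exact: mp_const_channel.
apply: mp_channel => [x|x|/F_cl cl x a b a_neq_b].
- by apply: psd_scale (F_psd x); rewrite invr_ge0 tr_ge0.
- by rewrite {1}/tr -mulr_sumr -/(tr (F _)) (F_tr x i0) mulVf.
- by rewrite cl // mulr0.
Qed.

Lemma normalized_mpE i i' a b :
  F (ketbra R i i') a b =
  tr (F (ketbra R i0 i0)) * normalized_mp F i0 a0 (ketbra R i i') a b.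
Proof.
have [F_off F_psd F_tr _] := F_mp; rewrite /normalized_mp.
have [<-|i_neq_i'] := eqVneq i i'; last first.
  by rewrite F_off //; case: ifP => _; rewrite mp_ketbra (negbTE i_neq_i') mul0r mulr0.
case: ifP => [/eqP w0|/negbT w_neq0].
  by rewrite w0 mul0r; apply: psd_tr0 => //; rewrite (F_tr i i0).
by rewrite mp_ketbra eqxx mul1r mulrA mulfV ?mul1r.
Qed.

End NormalizedMp.

Lemma scaled_mp_on_basis_trivial (I J : finType) (F : op I -> op J) :
  #|I| = 1%N -> (forall i, psd (F (ketbra R i i))) -> scaled_mp_on_basis KQ F.
Proof.
move=> /fintype1 [i0 eq_i0] F_psd.
by split=> // [i i'|i i']; rewrite (eq_i0 i) (eq_i0 i') ?eqxx.
Qed.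

Lemma sum_enum_val (T : finType) (F : T -> C) : \sum_(k < #|T|) F (enum_val k) = \sum_t F t.
Proof. by rewrite -big_enum_val; apply: eq_bigl => t; rewrite inE. Qed.

Lemma LOSR_free_of_scaled_mp_decomposition (kX kY kA kB : kind) (X Y A B Q : finType)
    (T : op (X * Y)%type -> op (A * B)%type) (FA : Q -> op X -> op A) (FB : Q -> op Y -> op B)
    (x0 : X) (y0 : Y) (a0 : A) (b0 : B) :
  linmap T -> tr (T (tens (ketbra R x0 x0) (ketbra R y0 y0))) = 1 ->
  (forall i i' j j', T (tens (ketbra R i i') (ketbra R j j')) =
     fun u v => \sum_q tens (FA q (ketbra R i i')) (FB q (ketbra R j j')) u v) ->
  (forall q, scaled_mp_on_basis kA (FA q)) -> (forall q, scaled_mp_on_basis kB (FB q)) ->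
  LOSR_free kX kY kA kB T.
Proof.
move=> T_lin T_tr T_dec FA_mp FB_mp.
pose w q := tr (FA q (ketbra R x0 x0)) * tr (FB q (ketbra R y0 y0)).
pose GA q := normalized_mp (FA q) x0 a0; pose GB q := normalized_mp (FB q) y0 b0.
have GA_ch q : channel kX kA (GA q) := normalized_mp_channel x0 a0 (FA_mp q) kX.
have GB_ch q : channel kY kB (GB q) := normalized_mp_channel y0 b0 (FB_mp q) kY.
have GA_lin q : linmap (GA q) by case: (GA_ch q) => -[].
have GB_lin q : linmap (GB q) by case: (GB_ch q) => -[].
have T_prod i i' j j' : T (tens (ketbra R i i') (ketbra R j j')) =
    fun u v => \sum_q w q * maptens (GA q) (GB q) (tens (ketbra R i i') (ketbra R j j')) u v.
  rewrite T_dec; apply: op_ext => u v; apply: eq_bigr => q _.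
  rewrite maptens_tens // /tens (normalized_mpE x0 a0 (FA_mp q)).
  by rewrite (normalized_mpE y0 b0 (FB_mp q)) /w /GA /GB; ring.
exists #|Q|, (fun k => w (enum_val k)), (fun k => GA (enum_val k)), (fun k => GB (enum_val k)).
split=> [|k|Z u v]; [split=> [k|] | by split |].
- by apply: mulr_ge0; apply: tr_ge0; [case: (FA_mp (enum_val k)) | case: (FB_mp (enum_val k))].
- rewrite sum_enum_val -T_tr T_dec /tr exchange_big /=; apply: eq_bigr => q _.
  by rewrite /w -tr_tens.
- pose T' Z u v := \sum_(k < #|Q|)
    w (enum_val k) * maptens (GA (enum_val k)) (GB (enum_val k)) Z u v.
  have T'_lin : linmap T'.
    move=> c Z1 Z2 a b; rewrite /T' mulr_sumr -big_split /=; apply: eq_bigr => k _.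
    by rewrite linmap_maptens //; ring.
  suff -> : T Z = T' Z by [].
  apply: (linmap_ketbra_ext T_lin T'_lin) => -[i j] [i' j'].
  rewrite ketbra_pair T_prod; apply: op_ext => a b.
  exact: esym (sum_enum_val (fun q => w q * maptens (GA q) (GB q) _ a b)).
Qed.

Definition block (X M : finType) (x : X) (G : op (X * M)%type) : op M :=
  relabel (fun m => (x, m)) G.

Definition blockdiag (X M : finType) (G : op (X * M)%type) : Prop :=
  forall x x' m m', x != x' -> G (x, m) (x', m') = 0.

Lemma blockdiag_trivial (X M : finType) (G : op (X * M)%type) : #|X| = 1%N -> blockdiag G.
Proof. by move=> /fintype1 [x0 eq_x0] x x'; rewrite (eq_x0 x) (eq_x0 x') eqxx. Qed.

Lemma blockdiag_sum (X M : finType) (W : op (X * M)%type) u v : blockdiag W ->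
  W u v = \sum_x tens (ketbra R x x) (block x W) u v.
Proof.
case: u v => [x1 m] [x2 m'] W_bd.
rewrite (bigD1 x1) //= [X in _ + X]big1 ?addr0 => [|x x_neq]; last first.
  by rewrite /tens /ketbra /= eq_sym (negbTE x_neq) !mul0r.
rewrite /tens /ketbra /block /relabel /= eqxx mul1r.
by have [->|x_neq] := eqVneq x2 x1; [rewrite mul1r | rewrite mul0r W_bd // eq_sym].
Qed.

Lemma tr_block_sum (X M : finType) (G : op (X * M)%type) : \sum_x tr (block x G) = tr G.
Proof. by rewrite [RHS]/tr big_pair. Qed.

(* [(R (x) id_(M_A M_B)) (G (x) H)], the middle stage of [tau]. *)
Definition with_memory (X Y A B MA MB : finType) (Rs : op (X * Y)%type -> op (A * B)%type)
    (G : op (X * MA)%type) (H : op (Y * MB)%type) : op ((A * MA) * (B * MB))%type :=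
  relabel (@sw_out A B MA MB) (ampl_l Rs (relabel (@sw_in X Y MA MB) (tens G H))).

Definition box_prob (X Y A B : finType) (Rs : op (X * Y)%type -> op (A * B)%type)
    (x : X) (y : Y) (a : A) (b : B) : C :=
  Rs (ketbra R (x, y) (x, y)) (a, b) (a, b).

Section ResourceOutputs.
Variables (kX kY kA kB : kind) (X Y A B : finType) (Rs : op (X * Y)%type -> op (A * B)%type).
Hypothesis Rs_res : resource kX kY kA kB Rs.

Lemma resource_blockdiag_out : kA = KC -> forall xy, blockdiag (Rs (ketbra R xy xy)).
Proof.
have [_ [_ [_ [_ [_ [Rs_clA _]]]]]] := Rs_res.
move=> kA_C [x y] a a' b b' a_neq; rewrite ketbra_pair.
by apply: Rs_clA => //; apply: density_ketbra.
Qed.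

Lemma resource_diag_out : kA = KC -> kB = KC ->
  forall xy u v, u != v -> Rs (ketbra R xy xy) u v = 0.
Proof.
have [_ [_ [_ [_ [_ [Rs_clA [Rs_clB _]]]]]]] := Rs_res.
move=> kA_C kB_C [x y] [a b] [a' b']; rewrite xpair_eqE negb_and ketbra_pair.
by case/orP=> [a_neq|b_neq]; [apply: Rs_clA | apply: Rs_clB] => //; apply: density_ketbra.
Qed.

Lemma box_prob_no_signalling x x' y b :
  \sum_a box_prob Rs x y a b = \sum_a box_prob Rs x' y a b.
Proof.
have [_ [_ [_ [Rs_ns _]]]] := Rs_res.
rewrite /box_prob !(ketbra_pair _ _ y y).
by apply: Rs_ns; apply: density_ketbra.
Qed.

End ResourceOutputs.

Section WithMemory.
Variables (X Y A B MA MB : finType) (Rs : op (X * Y)%type -> op (A * B)%type).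
Variables (G : op (X * MA)%type) (H : op (Y * MB)%type).
Hypotheses (Rs_lin : linmap Rs) (G_bd : blockdiag G) (H_bd : blockdiag H).

Lemma with_memory_blockdiag s t : with_memory Rs G H s t =
  \sum_x \sum_y Rs (ketbra R (x, y) (x, y)) (s.1.1, s.2.1) (t.1.1, t.2.1) *
                (block x G s.1.2 t.1.2 * block y H s.2.2 t.2.2).
Proof.
pose W i j := G (i.1, s.1.2) (j.1, t.1.2) * H (i.2, s.2.2) (j.2, t.2.2).
have W_diag i j : i != j -> W i j = 0.
  case: i j => [x1 y1] [x2 y2]; rewrite xpair_eqE negb_and => /orP[x_neq|y_neq].
    by rewrite /W G_bd ?mul0r.
  by rewrite /W H_bd ?mulr0.
have -> : with_memory Rs G H s t = Rs W (s.1.1, s.2.1) (t.1.1, t.2.1) by [].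
rewrite (_ : W = fun i j => \sum_(u <- index_enum (prod X Y)) W u u * ketbra R u u i j).
  rewrite (linmap_sum Rs_lin) -/(\sum_(u : prod X Y) _) big_pair.
  by apply: eq_bigr => x _; apply: eq_bigr => y _; rewrite mulrC.
by apply: op_ext => i j; apply: diag_sum.
Qed.

Lemma with_memory_classical_out : (forall xy, blockdiag (Rs (ketbra R xy xy))) ->
  with_memory Rs G H = fun s t => \sum_(q : (X * A) * Y) 1 *
    tens (tens (ketbra R q.1.2 q.1.2) (block q.1.1 G))
         (tens (block q.1.2 (Rs (ketbra R (q.1.1, q.2) (q.1.1, q.2)))) (block q.2 H)) s t.
Proof.
move=> Rs_cl; apply: op_ext => s t; rewrite with_memory_blockdiag big_pair big_pair.
apply: eq_bigr => x _; rewrite exchange_big; apply: eq_bigr => y _.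
rewrite (blockdiag_sum _ _ (Rs_cl (x, y))) mulr_suml; apply: eq_bigr => a _.
by rewrite /tens /=; ring.
Qed.

Lemma with_memory_box : (forall xy u v, u != v -> Rs (ketbra R xy xy) u v = 0) ->
  with_memory Rs G H = fun s t => \sum_(q : (X * A) * (Y * B))
    box_prob Rs q.1.1 q.2.1 q.1.2 q.2.2 *
    tens (tens (ketbra R q.1.2 q.1.2) (block q.1.1 G))
         (tens (ketbra R q.2.2 q.2.2) (block q.2.1 H)) s t.
Proof.
move=> Rs_diag; apply: op_ext => s t; rewrite with_memory_blockdiag !big_pair /=.
apply: eq_bigr => x _; rewrite exchange_big big_pair; apply: eq_bigr => y _.
rewrite (diag_sum _ _ (Rs_diag (x, y))) mulr_suml big_pair [RHS]exchange_big.
apply: eq_bigr => a _; apply: eq_bigr => b _.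
by rewrite /box_prob (ketbra_pair a a b b) /tens /=; ring.
Qed.

End WithMemory.

Section Tau.
Variables (X Y A B X' Y' A' B' MA MB : finType) (n : nat) (p : 'I_n -> C).
Variables (PA : 'I_n -> op X' -> op (X * MA)%type) (PB : 'I_n -> op Y' -> op (Y * MB)%type).
Variables (EA : 'I_n -> op (A * MA)%type -> op A') (EB : 'I_n -> op (B * MB)%type -> op B').
Variable Rs : op (X * Y)%type -> op (A * B)%type.
Hypothesis p_prob : prob p.
Hypotheses (PA_ch : forall l, qchannel (PA l)) (PB_ch : forall l, qchannel (PB l)).
Hypotheses (EA_ch : forall l, qchannel (EA l)) (EB_ch : forall l, qchannel (EB l)).
Hypotheses (PA_bd : forall l Z, blockdiag (PA l Z)) (PB_bd : forall l Z, blockdiag (PB l Z)).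
Hypotheses (Rs_lin : linmap Rs) (Rs_cp : CP Rs).

Local Notation T := (tau p PA PB EA EB Rs).
Hypothesis T_lin : linmap T.
Hypothesis T_tr : forall xi psi, density xi -> density psi -> tr (T (tens xi psi)) = 1.

Let p_ge0 l : 0 <= p l. Proof. by case: p_prob. Qed.
Let PA_lin l : linmap (PA l). Proof. by case: (PA_ch l). Qed.
Let PB_lin l : linmap (PB l). Proof. by case: (PB_ch l). Qed.
Let EA_lin l : linmap (EA l). Proof. by case: (EA_ch l). Qed.
Let EB_lin l : linmap (EB l). Proof. by case: (EB_ch l). Qed.
Let PA_tp l : TP (PA l). Proof. by case: (PA_ch l). Qed.
Let EA_tp l : TP (EA l). Proof. by case: (EA_ch l). Qed.
Let PA_psd l Z : psd Z -> psd (PA l Z). Proof. by apply: CP_psd; case: (PA_ch l). Qed.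
Let PB_psd l Z : psd Z -> psd (PB l Z). Proof. by apply: CP_psd; case: (PB_ch l). Qed.
Let EA_psd l Z : psd Z -> psd (EA l Z). Proof. by apply: CP_psd; case: (EA_ch l). Qed.
Let EB_psd l Z : psd Z -> psd (EB l Z). Proof. by apply: CP_psd; case: (EB_ch l). Qed.

Lemma tau_tens (Q : finType) (c : Q -> C) (KA : Q -> op (X * MA)%type -> op (A * MA)%type)
    (KB : Q -> op (Y * MB)%type -> op (B * MB)%type) xi psi :
  (forall G H, blockdiag G -> blockdiag H ->
     with_memory Rs G H = fun s t => \sum_q c q * tens (KA q G) (KB q H) s t) ->
  T (tens xi psi) = fun u v => \sum_(lq : 'I_n * Q) p lq.1 * c lq.2 *
    tens (EA lq.1 (KA lq.2 (PA lq.1 xi))) (EB lq.1 (KB lq.2 (PB lq.1 psi))) u v.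
Proof.
move=> decomp; apply: op_ext => u v; rewrite /tau big_pair; apply: eq_bigr => l _.
rewrite maptens_tens // -/(with_memory Rs (PA l xi) (PB l psi)) decomp //.
rewrite (linmap_sum (linmap_maptens (EA_lin l) (EB_lin l))) mulr_sumr.
by apply: eq_bigr => q _; rewrite maptens_tens // mulrA.
Qed.

Lemma tau_LOSR_free_state :
  #|X'| = 1%N -> #|Y'| = 1%N -> (0 < #|A'|)%N -> (0 < #|B'|)%N ->
  (forall xy, blockdiag (Rs (ketbra R xy xy))) ->
  LOSR_free KI KI KQ KQ T.
Proof.
move=> X'_1 Y'_1 /card_gt0P[a0' _] /card_gt0P[b0' _] Rs_cl.
have [x0' _] := fintype1 X'_1; have [y0' _] := fintype1 Y'_1.
pose FA (t : 'I_n * ((X * A) * Y)) (xi : op X') := fun u v =>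
  p t.1 * 1 * EA t.1 (tens (ketbra R t.2.1.2 t.2.1.2) (block t.2.1.1 (PA t.1 xi))) u v.
pose FB (t : 'I_n * ((X * A) * Y)) (psi : op Y') := EB t.1
  (tens (block t.2.1.2 (Rs (ketbra R (t.2.1.1, t.2.2) (t.2.1.1, t.2.2))))
        (block t.2.2 (PB t.1 psi))).
apply: (@LOSR_free_of_scaled_mp_decomposition _ _ _ _ _ _ _ _ _ _ FA FB x0' y0' a0' b0' T_lin).
- by apply: T_tr; apply: density_ketbra.
- move=> i i' j j'; rewrite (tau_tens _ _ (fun G H G_bd H_bd =>
    with_memory_classical_out Rs_lin G_bd H_bd Rs_cl)).
  by apply: op_ext => u v; apply: eq_bigr => t _; rewrite /tens mulrA.
- move=> t; apply: scaled_mp_on_basis_trivial => // i.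
  apply: psd_scale; first by rewrite mulr1 p_ge0.
  apply/EA_psd/psd_tens; first exact: psd_ketbra.
  exact/psd_relabel/PA_psd/psd_ketbra.
- move=> t; apply: scaled_mp_on_basis_trivial => // j.
  apply/EB_psd/psd_tens; apply: psd_relabel; last exact/PB_psd/psd_ketbra.
  exact: CP_psd Rs_cp (psd_ketbra _).
Qed.

Lemma tau_LOSR_free_assemblage :
  (0 < #|X|)%N -> (0 < #|X'|)%N -> #|Y'| = 1%N -> (0 < #|A'|)%N -> (0 < #|B'|)%N ->
  (forall l i i' u v, i != i' -> PA l (ketbra R i i') u v = 0) ->
  (forall l Z a a', a != a' -> EA l Z a a' = 0) ->
  (forall xy u v, u != v -> Rs (ketbra R xy xy) u v = 0) ->
  (forall x x' y b, \sum_a box_prob Rs x y a b = \sum_a box_prob Rs x' y a b) ->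
  LOSR_free KC KI KC KQ T.
Proof.
move=> /card_gt0P[x0 _] /card_gt0P[x0' _] Y'_1 /card_gt0P[a0' _] /card_gt0P[b0' _].
move=> PA_cl EA_cl Rs_diag Rs_ns; have [y0' _] := fintype1 Y'_1.
(* Group the terms by Bob's (y, b); no-signalling makes Alice's weight
   p_l P(b|y) independent of her input. *)
pose FA (t : 'I_n * (Y * B)) (xi : op X') := fun u v => \sum_(xa : X * A)
  p t.1 * box_prob Rs xa.1 t.2.1 xa.2 t.2.2 *
  EA t.1 (tens (ketbra R xa.2 xa.2) (block xa.1 (PA t.1 xi))) u v.
pose FB (t : 'I_n * (Y * B)) (psi : op Y') :=
  EB t.1 (tens (ketbra R t.2.2 t.2.2) (block t.2.1 (PB t.1 psi))).
have FA_tr t i : tr (FA t (ketbra R i i)) = p t.1 * \sum_a box_prob Rs x0 t.2.1 a t.2.2.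
  rewrite tr_sum big_pair -[RHS]mulr1 -(tr_ketbra i) -(PA_tp t.1) -tr_block_sum.
  rewrite mulr_sumr; apply: eq_bigr => x _.
  under eq_bigr do rewrite EA_tp tr_tens tr_ketbra mul1r.
  by rewrite /= -(Rs_ns x) -mulr_suml -mulr_sumr.
apply: (@LOSR_free_of_scaled_mp_decomposition _ _ _ _ _ _ _ _ _ _ FA FB x0' y0' a0' b0' T_lin).
- by apply: T_tr; apply: density_ketbra.
- move=> i i' j j'; rewrite (tau_tens _ _ (fun G H G_bd H_bd =>
    with_memory_box Rs_lin G_bd H_bd Rs_diag)).
  apply: op_ext => u v; rewrite [LHS]big_pair [RHS]big_pair; apply: eq_bigr => l _.
  rewrite big_pair exchange_big; apply: eq_bigr => yb _.
  by rewrite /FA /FB /tens /= mulr_suml; apply: eq_bigr => xa _; ring.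
- move=> t; split=> [i i' a b i_neq|i|i i'|_ i a b a_neq].
  + rewrite /FA big1 // => xa _.
    rewrite (_ : tens _ _ = fun _ _ => 0) ?(linmap0 (EA_lin _)) ?mulr0 //.
    by apply: op_ext => u v; rewrite /tens /block /relabel PA_cl // mulr0.
  + apply: psd_sum => [xa|xa].
      apply: mulr_ge0 (p_ge0 _) _; apply: psd_diag_ge0.
      exact: CP_psd Rs_cp (psd_ketbra _).
    apply/EA_psd/psd_tens; first exact: psd_ketbra.
    exact/psd_relabel/PA_psd/psd_ketbra.
  + by rewrite !FA_tr.
  + by rewrite /FA big1 // => xa _; rewrite EA_cl // mulr0.
- move=> t; apply: scaled_mp_on_basis_trivial => // j.
  apply/EB_psd/psd_tens; first exact: psd_ketbra.
  exact/psd_relabel/PB_psd/psd_ketbra.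
Qed.

End Tau.

End QuantumResources.

Unset Implicit Arguments.

Theorem proposition2 (R : realType)
  (kX kY kA kB kX' kY' kA' kB' : kind)
  (X Y A B X' Y' A' B' MA MB : finType) (n : nat) (p : 'I_n -> R[i])
  (PA : 'I_n -> op R X' -> op R (X * MA)%type) (PB : 'I_n -> op R Y' -> op R (Y * MB)%type)
  (EA : 'I_n -> op R (A * MA)%type -> op R A') (EB : 'I_n -> op R (B * MB)%type -> op R B') :
  prop2_case kX kY kA kB kX' kY' kA' kB' ->
  systype kX X -> systype kY Y -> systype kA A -> systype kB B ->
  systype kX' X' -> systype kY' Y' -> systype kA' A' -> systype kB' B' ->
  LOSR_free_transformation kX kY kA kB kX' kY' kA' kB' p PA PB EA EB ->
  forall Rs : op R (X * Y)%type -> op R (A * B)%type,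
    resource kX kY kA kB Rs ->
    LOSR_free kX' kY' kA' kB' (tau p PA PB EA EB Rs).
Proof.
move=> kinds sX sY sA sB sX' sY' sA' sB' [p_prob [PA_tr PB_tr EA_tr EB_tr res_tr]] Rs Rs_res.
have [T_lin [_ [T_tr _]]] := res_tr Rs Rs_res.
have [Rs_lin [Rs_cp _]] := Rs_res.
have PA_ch l : qchannel (PA l) by case: (PA_tr l).
have PB_ch l : qchannel (PB l) by case: (PB_tr l).
have EA_ch l : qchannel (EA l) by case: (EA_tr l).
have EB_ch l : qchannel (EB l) by case: (EB_tr l).
case: kinds => [[[? ? ? ?] [? ? ? ?]]|[[? ? ? ?] [? ? ? ?]]|[[? ? ? ?] [? ? ? ?]]]; subst;
  have PA_bd l Z : blockdiag (PA l Z)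
    by move=> x x' m m' ?; case: (PA_tr l) => _ _ /(_ erefl) ->.
- have PB_bd l Z : blockdiag (PB l Z)
    by move=> y y' m m' ?; case: (PB_tr l) => _ _ /(_ erefl) ->.
  apply: tau_LOSR_free_state => //.
  exact: resource_blockdiag_out Rs_res erefl.
- have PB_bd l Z : blockdiag (PB l Z)
    by move=> y y' m m' ?; case: (PB_tr l) => _ _ /(_ erefl) ->.
  apply: tau_LOSR_free_assemblage => //.
  + by move=> l i i' u v ?; case: (PA_tr l) => _ /(_ erefl) ->.
  + by move=> l Z a a' ?; case: (EA_tr l) => _ _ /(_ erefl) ->.
  + exact: resource_diag_out Rs_res erefl erefl.
  + exact: box_prob_no_signalling Rs_res.
- have PB_bd l Z : blockdiag (PB l Z) by apply: blockdiag_trivial.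
  apply: tau_LOSR_free_state => //.
  exact: resource_blockdiag_out Rs_res erefl.
Qed.
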